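(* Let $a \in \mathbb{R}$ and $w \in \mathbb{C}$. Then: (I) $T(a,w) = (0,\infty)$ if and only if $a \ge |w|$ and $a > \operatorname{Re}(w)$. (II) $T(a,w)$ is a nonempty proper subset of $(0,\infty)$ if and only if $w \neq 0$ and $\operatorname{Re}(w) < a < |w|$. In this case $T(a,w) = (0, \tau_c(a,w))$, where $$\tau_c(a,w) = \frac{1}{\sqrt{|w|^2-a^2}}\left[|\operatorname{Arg}(w)| - \arccos\left(\frac{a}{|w|}\right)\right] = \frac{1}{\sqrt{|w|^2-a^2}}\left[|\operatorname{Arg}(w)| - \operatorname{arccot}\left(\frac{a}{\sqrt{|w|^2-a^2}}\right)\right] > 0.$$ (III) $T(a,w) = \emptyset$ if and only if $a \le \operatorname{Re}(w)$.
   Context: For $a, w \in \mathbb{C}$, $T(a,w)$ denotes the set of all $\tau > 0$ such that every root $z \in \mathbb{C}$ of $z + a - w e^{-\tau z} = 0$ has negative real part. $\operatorname{Arg}(w) \in (-\pi,\pi]$ is the principal argument of $w \neq 0$; $\arccos : [-1,1] \to [0,\pi]$ is the inverse of $\cos|_{[0,\pi]}$; $\operatorname{arccot}: \mathbb{R} \to (0,\pi)$ is the inverse of $\cot|_{(0,\pi)}$. *)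

From Stdlib Require Import Reals.
From Coquelicot Require Import Coquelicot.
Open Scope R_scope.

Definition cexp (z : C) : C :=
  (exp (Re z) * cos (Im z), exp (Re z) * sin (Im z)).

Definition T (a : R) (w : C) : R -> Prop :=
  fun tau => 0 < tau /\
    forall z : C, (z + RtoC a - w * cexp (- (RtoC tau * z)))%C = 0%C -> Re z < 0.

(* principal argument Arg w in (-PI, PI] (atan2 convention; Arg 0 := 0, unused) *)
Definition Arg (w : C) : R :=
  let x := Re w in let y := Im w in
  if Rlt_dec 0 x then atan (y / x)
  else if Rlt_dec x 0 then
    (if Rle_dec 0 y then atan (y / x) + PI else atan (y / x) - PI)
  else (if Rlt_dec 0 y then PI / 2
        else if Rlt_dec y 0 then - (PI / 2) else 0).

(* arccot : R -> (0, PI), inverse of cot restricted to (0, PI) *)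
Definition arccot (x : R) : R := PI / 2 - atan x.

(* critical delay (Stdlib's acos maps [-1,1] onto [0,PI]) *)
Definition tau_c (a : R) (w : C) : R :=
  / sqrt (Cmod w ^ 2 - a ^ 2) * (Rabs (Arg w) - acos (a / Cmod w)).

From Stdlib Require Import Reals Lra Psatz Lia Classical.
From Coquelicot Require Import Coquelicot.
Open Scope R_scope.

(* Fix [tau > 0] and [w <> 0], and write [phi = Arg w].  For a root [z = x + iy] set
   [u = tau (x + a)], [b = phi - tau y] and [rho = tau |w| e^(-tau x) = K e^(-u)] with the
   gain [K = tau |w| e^(tau a)].  The root equations become
       u = rho cos b,      phi = b + rho sin b,
   so [cos b = u e^u / K] must lie in [-1, 1] ("admissible" [u]), and roots with [x >= 0]
   are governed by the phase function
       phase u = acos (cos b) + rho sqrt (1 - cos b ^ 2)      on  u >= tau a :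
   such a root gives [|phi| <= phase u] (reduction of [phi] modulo [2 PI]), and
   [phase u = |phi|] yields such a root.  The phase is continuous, equals [PI] where
   [cos b = -1] and [0] where [cos b = 1], and is nonincreasing along admissible segments
   (a derivative computation plus the unimodality of [u e^u]).  This gives a stability
   criterion [phase (tau a) < |phi|] and an instability criterion [|phi| <= phase (tau a)],
   where [phase (tau a) = acos (a/|w|) + tau sqrt (|w|^2 - a^2)].  Comparing [acos (a/|w|)]
   with [|phi|] (note [cos |phi| = Re w / |w|]) yields regimes (II) and (III); regime (I),
   [|w| <= a], follows directly from the estimate [|z + a| = |w| e^(-tau x)]. *)

(* The normalisation occurring in [cos (atan (y/x))] and [sin (atan (y/x))]. *)
Lemma sqrt_one_plus_ratio x y :
  x <> 0 -> sqrt (1 + (y / x)²) = sqrt (x ^ 2 + y ^ 2) / Rabs x.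
Proof.
  intros Hx.
  assert (Hx' : 0 < Rabs x) by (apply Rabs_pos_lt; auto).
  assert (E : 1 + (y / x)² = (sqrt (x ^ 2 + y ^ 2) / Rabs x) ^ 2).
  { replace ((sqrt (x ^ 2 + y ^ 2) / Rabs x) ^ 2)
      with (sqrt (x ^ 2 + y ^ 2) ^ 2 / Rabs x ^ 2) by (field; lra).
    rewrite pow2_sqrt by nra. rewrite pow2_abs. unfold Rsqr. field. auto. }
  rewrite E, sqrt_pow2; auto.
  apply Rdiv_le_0_compat; [apply sqrt_pos | lra].
Qed.

Lemma Arg_polar (w : C) :
  w <> 0%C -> Re w = Cmod w * cos (Arg w) /\ Im w = Cmod w * sin (Arg w).
Proof.
  destruct w as [x y]. intros Hw. unfold Arg, Cmod, Re, Im; cbn [fst snd].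
  destruct (Rlt_dec 0 x) as [Hx|Hx].
  { rewrite cos_atan, sin_atan, sqrt_one_plus_ratio, Rabs_pos_eq by lra.
    assert (0 < sqrt (x ^ 2 + y ^ 2)) by (apply sqrt_lt_R0; nra).
    split; field; lra. }
  destruct (Rlt_dec x 0) as [Hx'|Hx'].
  { assert (0 < sqrt (x ^ 2 + y ^ 2)) by (apply sqrt_lt_R0; nra).
    destruct (Rle_dec 0 y).
    - rewrite neg_cos, neg_sin, cos_atan, sin_atan, sqrt_one_plus_ratio, Rabs_left by lra.
      split; field; lra.
    - rewrite cos_minus, sin_minus, cos_PI, sin_PI, cos_atan, sin_atan,
        sqrt_one_plus_ratio, Rabs_left by lra.
      split; field; lra. }
  assert (x = 0) by lra. subst x.
  replace (0 ^ 2 + y ^ 2) with (Rabs y ^ 2) by (rewrite pow2_abs; ring).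
  rewrite sqrt_pow2 by apply Rabs_pos.
  destruct (Rlt_dec 0 y).
  { rewrite cos_PI2, sin_PI2, Rabs_right by lra. lra. }
  destruct (Rlt_dec y 0).
  { rewrite cos_neg, sin_neg, cos_PI2, sin_PI2, Rabs_left by lra. lra. }
  exfalso. apply Hw. replace y with 0 by lra. reflexivity.
Qed.

Lemma Arg_bound (w : C) : -PI < Arg w <= PI.
Proof.
  destruct w as [x y]. unfold Arg, Re, Im; cbn [fst snd].
  pose proof PI_RGT_0. pose proof (atan_bound (y / x)).
  destruct (Rlt_dec 0 x) as [Hx|Hx]; [lra|].
  destruct (Rlt_dec x 0) as [Hx'|Hx'].
  - assert (Hinv : / x < 0) by (apply Rinv_lt_0_compat; lra).
    destruct (Rle_dec 0 y).
    + assert (atan (y / x) <= atan 0).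
      { destruct (Req_dec y 0) as [->|Hy].
        - unfold Rdiv. rewrite Rmult_0_l. lra.
        - left. apply atan_increasing. unfold Rdiv. nra. }
      rewrite atan_0 in *. lra.
    + assert (atan 0 < atan (y / x)) by (apply atan_increasing; unfold Rdiv; nra).
      rewrite atan_0 in *. lra.
  - destruct (Rlt_dec 0 y); [lra|]. destruct (Rlt_dec y 0); lra.
Qed.

Lemma Rabs_Arg_le_PI (w : C) : 0 <= Rabs (Arg w) <= PI.
Proof. pose proof (Arg_bound w). split; [apply Rabs_pos | apply Rabs_le; lra]. Qed.

(* Since cos is even, [|Arg w|] is an angle in [0, PI] with cosine [Re w / |w|]. *)
Lemma Re_cos_Rabs_Arg (w : C) : w <> 0%C -> Re w = Cmod w * cos (Rabs (Arg w)).
Proof.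
  intros Hw. destruct (Arg_polar w Hw) as [H _]. rewrite H.
  destruct (Rle_dec 0 (Arg w)).
  - rewrite Rabs_right by lra. reflexivity.
  - rewrite Rabs_left, cos_neg by lra. reflexivity.
Qed.

(* Away from 0, [acos] is given (up to reflection) by this [atan] expression. *)
Lemma continuous_atan_sqrt_ratio (x : R) :
  x <> 0 -> continuous (fun y => atan (sqrt (1 - y²) / y)) x.
Proof.
  intros Hx. apply continuous_atan_comp.
  apply (continuous_mult (fun y => sqrt (1 - y²)) (fun y => / y)).
  - apply continuous_sqrt_comp. apply continuity_pt_filterlim. unfold Rsqr. reg.
  - apply continuous_Rinv_comp; auto. apply continuous_id.
Qed.

Lemma Re_between_Cmod (w : C) : - Cmod w <= Re w <= Cmod w.
Proof. apply Rabs_le_between, re_le_Cmod. Qed.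

(* Stdlib's [acos] is total (constant outside [-1, 1]) and continuous everywhere;
   this is needed to apply the intermediate value theorem to the phase function. *)
Lemma continuous_acos (x : R) : continuous acos x.
Proof.
  destruct (Rlt_dec 0 x) as [Hx|Hx].
  { apply continuous_ext_loc with (fun y => atan (sqrt (1 - y²) / y)).
    - apply (filter_imp (fun y => 0 < y)); [|apply open_gt; auto].
      intros y Hy. symmetry; apply acos_atan; auto.
    - apply continuous_atan_sqrt_ratio; lra. }
  destruct (Rlt_dec x 0) as [Hx'|Hx'].
  { apply continuous_ext_loc with (fun y => PI - atan (sqrt (1 - (- y)²) / - y)).
    - apply (filter_imp (fun y => y < 0)); [|apply open_lt; auto].
      intros y Hy. rewrite <- (acos_atan (- y)) by lra.
      rewrite acos_opp. simpl. lra.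
    - apply (continuous_minus (fun _ => PI)); [apply continuous_const|].
      apply (continuous_comp Ropp (fun y => atan (sqrt (1 - y²) / y))).
      + apply continuity_pt_filterlim; reg.
      + apply continuous_atan_sqrt_ratio; lra. }
  assert (x = 0) by lra. subst x. apply continuity_pt_filterlim.
  apply derivable_continuous_pt, derivable_pt_acos. lra.
Qed.

(* The function [u e^u]: strictly decreasing on (-oo, -1], strictly increasing on
   [-1, +oo), with its minimum at [-1].  Its level sets govern where the phase
   function below is defined. *)
Definition xexp (u : R) : R := u * exp u.

Lemma xexp_decreasing u v : u < v <= -1 -> xexp v < xexp u.
Proof.
  intros Huv. unfold xexp.
  (* e^(v-u) > 1 + (v - u) and v < 0 give v e^(v-u) < v (1 + v - u) <= u *)
  pose proof (exp_ineq1 (v - u) ltac:(lra)). pose proof (exp_pos u).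
  replace (exp v) with (exp u * exp (v - u)) by (rewrite <- exp_plus; f_equal; ring).
  assert (v * exp (v - u) < u) by nra. nra.
Qed.

Lemma xexp_increasing u v : -1 <= u < v -> xexp u < xexp v.
Proof.
  intros Huv. unfold xexp.
  pose proof (exp_ineq1 (u - v) ltac:(lra)). pose proof (exp_pos v).
  assert (exp (u - v) < 1) by (rewrite <- exp_0; apply exp_increasing; lra).
  replace (exp u) with (exp v * exp (u - v)) by (rewrite <- exp_plus; f_equal; ring).
  assert (u * exp (u - v) < v).
  { destruct (Rle_lt_dec 0 u); [pose proof (exp_pos (u - v)); nra | nra]. }
  nra.
Qed.

Lemma continuous_xexp : continuity xexp.
Proof. intros x. unfold xexp. reg. Qed.

Lemma xexp_le_left c m t : 0 <= c -> m <= t -> xexp t <= c -> xexp m <= c.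
Proof.
  intros Hc Hmt Ht. destruct (Rle_lt_dec (xexp m) c) as [|Hm]; auto.
  assert (0 < m) by (unfold xexp in Hm; pose proof (exp_pos m); nra).
  destruct (Req_dec m t) as [->|]; [lra|].
  pose proof (xexp_increasing m t ltac:(lra)). lra.
Qed.

Lemma xexp_level c : 0 < c -> exists t, 0 <= t /\ xexp t = c.
Proof.
  intros Hc.
  assert (c <= xexp c).
  { unfold xexp. pose proof (exp_ineq1_le c). nra. }
  destruct (IVT_gen xexp 0 c c continuous_xexp) as [t [Ht E]].
  - replace (xexp 0) with 0 by (unfold xexp; ring).
    rewrite Rmin_left, Rmax_right; lra.
  - rewrite Rmin_left, Rmax_right in Ht by lra. exists t. split; [lra | auto].
Qed.

Lemma xexp_interior_min u p r :
  p < u < r -> (forall m, p <= m <= r -> xexp u <= xexp m) -> u = -1.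
Proof.
  intros Hu Hmin. destruct (Rtotal_order u (-1)) as [Hlt|[Heq|Hgt]]; auto; exfalso.
  - set (m := (u + Rmin r (-1)) / 2).
    pose proof (Rmin_l r (-1)). pose proof (Rmin_r r (-1)).
    assert (u < Rmin r (-1)) by (apply Rmin_glb_lt; lra).
    assert (Hm : u < m <= -1) by (unfold m; lra).
    pose proof (xexp_decreasing u m Hm). pose proof (Hmin m ltac:(unfold m; lra)). lra.
  - set (m := (u + Rmax p (-1)) / 2).
    pose proof (Rmax_l p (-1)). pose proof (Rmax_r p (-1)).
    assert (Rmax p (-1) < u) by (apply Rmax_lub_lt; lra).
    assert (Hm : -1 <= m < u) by (unfold m; lra).
    pose proof (xexp_increasing m u Hm). pose proof (Hmin m ltac:(unfold m; lra)). lra.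
Qed.

Lemma xexp_superlevel_tail c p r : p <= r -> c < xexp r ->
  (forall m, p <= m <= r -> c <= xexp m) \/
  (exists t1, p <= t1 <= r /\ xexp t1 = c /\ forall m, t1 <= m <= r -> c <= xexp m).
Proof.
  intros Hpr Hr.
  destruct (classic (exists u, p <= u <= r /\ xexp u < c)) as [[u [Hu Hlow]]|Hnone].
  - right. destruct (IVT_gen xexp u r c continuous_xexp) as [t1 [Ht1 E]].
    { rewrite Rmin_left, Rmax_right; lra. }
    rewrite Rmin_left, Rmax_right in Ht1 by lra.
    exists t1. split; [lra|]. split; [auto|]. intros m Hm.
    (* [u < t1] with [xexp u < xexp t1] forces [t1 > -1], where xexp increases *)
    assert (u < t1) by (destruct (Req_dec u t1) as [->|]; lra).
    assert (-1 < t1).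
    { destruct (Rle_lt_dec t1 (-1)) as [Hle|]; auto.
      pose proof (xexp_decreasing u t1 ltac:(lra)). lra. }
    destruct (Req_dec m t1) as [->|]; [lra|].
    pose proof (xexp_increasing t1 m ltac:(lra)). lra.
  - left. intros m Hm. destruct (Rle_lt_dec c (xexp m)); auto.
    exfalso. apply Hnone. exists m. auto.
Qed.

Lemma xexp_superlevel_head c p r : p <= r -> c < xexp p ->
  (forall m, p <= m <= r -> c <= xexp m) \/
  (exists t1, p <= t1 <= r /\ xexp t1 = c /\ forall m, p <= m <= t1 -> c <= xexp m).
Proof.
  intros Hpr Hp.
  destruct (classic (exists u, p <= u <= r /\ xexp u < c)) as [[u [Hu Hlow]]|Hnone].
  - right. destruct (IVT_gen xexp p u c continuous_xexp) as [t1 [Ht1 E]].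
    { rewrite Rmin_right, Rmax_left; lra. }
    rewrite Rmin_left, Rmax_right in Ht1 by lra.
    exists t1. split; [lra|]. split; [auto|]. intros m Hm.
    (* [t1 < u] with [xexp u < xexp t1] forces [t1 < -1], where xexp decreases *)
    assert (t1 < u) by (destruct (Req_dec u t1) as [->|]; lra).
    assert (t1 < -1).
    { destruct (Rlt_le_dec t1 (-1)) as [|Hge]; auto.
      pose proof (xexp_increasing t1 u ltac:(lra)). lra. }
    destruct (Req_dec m t1) as [->|]; [lra|].
    pose proof (xexp_decreasing m t1 ltac:(lra)). lra.
  - left. intros m Hm. destruct (Rle_lt_dec c (xexp m)); auto.
    exfalso. apply Hnone. exists m. auto.
Qed.

Lemma is_derive_acos x : -1 < x < 1 -> is_derive acos x (-1 / sqrt (1 - x ^ 2)).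
Proof.
  intros Hx. apply is_derive_Reals.
  replace (x ^ 2) with (x²) by (unfold Rsqr; ring).
  apply (derive_pt_eq_1 _ _ _ (derivable_pt_acos x Hx)), derive_pt_acos.
Qed.

(* For a root [x + iy] and [u = tau (x + a)],
   [rho u] is the scaled modulus [tau |w e^(-tau z)|], [cosb u = u / rho u] is the
   cosine of the angle [Arg w - tau y], and [phase u] is the value of
   [theta + rho sin theta] at [theta = acos (cosb u)] in [0, PI]. *)
Section Phase.
Variable K : R.
Hypothesis HK : 0 < K.

Definition rho (u : R) : R := K * exp (- u).
Definition cosb (u : R) : R := xexp u / K.
Definition phase (u : R) : R := acos (cosb u) + rho u * sqrt (1 - cosb u ^ 2).

Definition dphase (u : R) : R :=
  - ((1 + 2 * u) * exp u / K + rho u) / sqrt (1 - cosb u ^ 2).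

(* Chain rule; the result simplifies by [sqrt (1 - cosb^2)^2 = 1 - cosb^2] and
   [cosb u * rho u = u]. *)
Lemma is_derive_phase u : -1 < cosb u < 1 -> is_derive phase u (dphase u).
Proof.
  intros Hq.
  assert (Hc : is_derive cosb u ((1 + u) * exp u / K)).
  { unfold cosb, xexp. auto_derive; [auto | field; lra]. }
  assert (Hacos : is_derive (fun v => acos (cosb v)) u
                    ((1 + u) * exp u / K * (-1 / sqrt (1 - cosb u ^ 2))))
    by (apply (is_derive_comp acos cosb); [apply is_derive_acos|]; auto).
  assert (Hmod : is_derive (fun v => rho v * sqrt (1 - cosb v ^ 2)) u
                   (- rho u * sqrt (1 - cosb u ^ 2)
                    + rho u * (- cosb u * ((1 + u) * exp u / K) / sqrt (1 - cosb u ^ 2)))).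
  { unfold rho, cosb, xexp in *. auto_derive;
      replace (1 + - (u * exp u * / K * (u * exp u * / K * 1)))
        with (1 - (u * exp u / K) ^ 2) by (unfold Rdiv; ring).
    - nra.
    - assert (0 < sqrt (1 - (u * exp u / K) ^ 2)) by (apply sqrt_lt_R0; nra).
      field. lra. }
  assert (Hr2 : sqrt (1 - cosb u ^ 2) * sqrt (1 - cosb u ^ 2) = 1 - cosb u ^ 2)
    by (apply sqrt_sqrt; nra).
  assert (Hr : 0 < sqrt (1 - cosb u ^ 2)) by (apply sqrt_lt_R0; nra).
  set (r := sqrt (1 - cosb u ^ 2)) in *.
  replace (dphase u) with (plus ((1 + u) * exp u / K * (-1 / r))
    (- rho u * r + rho u * (- cosb u * ((1 + u) * exp u / K) / r))).
  - exact (is_derive_plus _ _ _ _ _ Hacos Hmod).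
  - assert (Er : - rho u * r = - rho u * (1 - cosb u ^ 2) / r)
      by (rewrite <- Hr2; field; lra).
    unfold dphase. fold r. unfold plus; simpl. rewrite Er.
    unfold rho, cosb, xexp. rewrite exp_Ropp. pose proof (exp_pos u).
    field. lra.
Qed.

Lemma rho_pos u : 0 < rho u.
Proof. unfold rho. pose proof (exp_pos (- u)). nra. Qed.

Lemma cosb_rho u : cosb u * rho u = u.
Proof.
  unfold cosb, rho, xexp. rewrite exp_Ropp. pose proof (exp_pos u). field. lra.
Qed.

Lemma cosb_scale u : cosb u * K = xexp u.
Proof. unfold cosb. field. lra. Qed.

Definition admissible (u : R) : Prop := -1 <= cosb u <= 1.

Lemma admissible_iff u : admissible u <-> -K <= xexp u <= K.
Proof. unfold admissible. rewrite <- cosb_scale. split; intros; nra. Qed.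

Lemma admissible_left m t : m <= t -> admissible t -> -K <= xexp m -> admissible m.
Proof.
  intros Hmt Ht Hm. apply admissible_iff. split; auto.
  apply (xexp_le_left K m t); [lra | auto | apply admissible_iff, Ht].
Qed.

Lemma phase_cosb_1 u : cosb u = 1 -> phase u = 0.
Proof.
  intros H. unfold phase. rewrite H, acos_1.
  replace (1 - 1 ^ 2) with 0 by ring. rewrite sqrt_0. ring.
Qed.

Lemma phase_cosb_m1 u : cosb u = -1 -> phase u = PI.
Proof.
  intros H. unfold phase. rewrite H.
  replace (-1) with (- (1)) by ring. rewrite acos_opp, acos_1.
  replace (1 - (- (1)) ^ 2) with 0 by ring. rewrite sqrt_0. ring.
Qed.

Lemma continuous_phase : continuity phase.
Proof.
  intros x. apply continuity_pt_filterlim. unfold phase.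
  assert (Hc : continuous cosb x).
  { apply continuity_pt_filterlim. unfold cosb, xexp.
    apply derivable_continuous_pt. reg. }
  apply (continuous_plus (fun u => acos (cosb u)) (fun u => rho u * sqrt (1 - cosb u ^ 2))).
  - apply (continuous_comp cosb acos); [exact Hc | apply continuous_acos].
  - apply (continuous_mult rho (fun u => sqrt (1 - cosb u ^ 2))).
    + apply continuity_pt_filterlim. unfold rho. apply derivable_continuous_pt. reg.
    + apply continuous_sqrt_comp.
      apply (continuous_minus (fun _ => 1) (fun u => cosb u ^ 2));
        [apply continuous_const | apply (continuous_comp cosb (fun c => c ^ 2)); auto].
      apply continuity_pt_filterlim. reg.
Qed.

(* The numerator of [dphase] is [((1+u)e^u/K)^2 + 1 - (u e^u/K)^2] up to the
   positive factor [K e^(-u)], hence nonnegative where [|cosb u| <= 1]. *)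
Lemma dphase_nonpos u : admissible u -> dphase u <= 0.
Proof.
  intros Hq. unfold dphase, admissible, cosb, rho, xexp in *.
  set (E := exp u / K).
  assert (HE : 0 < E) by (unfold E; pose proof (exp_pos u); apply Rdiv_lt_0_compat; lra).
  replace (u * exp u / K) with (u * E) in * by (unfold E; field; lra).
  replace ((1 + 2 * u) * exp u / K) with ((1 + 2 * u) * E) by (unfold E; field; lra).
  replace (K * exp (- u)) with (/ E) by (unfold E; rewrite exp_Ropp; field;
    pose proof (exp_pos u); lra).
  assert (Hnum : 0 <= (1 + 2 * u) * E + / E).
  { assert (0 <= E * ((1 + 2 * u) * E + / E)).
    { replace (E * ((1 + 2 * u) * E + / E)) with ((E * (1 + u)) ^ 2 + (1 - (u * E) ^ 2))
        by (field; lra).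
      assert ((u * E) ^ 2 <= 1) by (destruct Hq; nra).
      pose proof (pow2_ge_0 (E * (1 + u))). lra. }
    nra. }
  assert (0 <= / sqrt (1 - (u * E) ^ 2)).
  { destruct (Req_dec (sqrt (1 - (u * E) ^ 2)) 0) as [Z|Z].
    - rewrite Z, Rinv_0. lra.
    - left. apply Rinv_0_lt_compat. pose proof (sqrt_pos (1 - (u * E) ^ 2)). lra. }
  unfold Rdiv. nra.
Qed.

Lemma phase_nonincreasing_open t t' : t <= t' ->
  (forall m, t <= m <= t' -> admissible m) ->
  (forall m, t < m < t' -> -1 < cosb m < 1) -> phase t' <= phase t.
Proof.
  intros Htt' Hadm Hint.
  destruct (MVT_gen phase t t' dphase) as [c [Hc E]].
  - rewrite Rmin_left, Rmax_right by lra. intros x Hx. apply is_derive_phase; auto.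
  - intros x _. apply continuous_phase.
  - rewrite Rmin_left, Rmax_right in Hc by lra.
    pose proof (dphase_nonpos c (Hadm c Hc)). nra.
Qed.

(* On an admissible segment, [cosb = 1] only at the right end (xexp increases where
   positive) and [cosb = -1] at an interior point only at the minimum [u = -1]. *)
Lemma admissible_interior t t' u : (forall m, t <= m <= t' -> admissible m) ->
  t < u < t' -> u <> -1 -> -1 < cosb u < 1.
Proof.
  intros Hadm Hu Hnot.
  pose proof (cosb_scale u). pose proof (proj1 (admissible_iff t') (Hadm t' ltac:(lra))).
  destruct (proj1 (admissible_iff u) (Hadm u ltac:(lra))) as [Hlow Hup].
  split.
  - destruct (Req_dec (xexp u) (- K)) as [Eq|]; [exfalso|nra].
    apply Hnot, (xexp_interior_min u t t' Hu). intros m Hm.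
    rewrite Eq. apply (admissible_iff m), Hadm, Hm.
  - destruct (Req_dec (xexp u) K) as [Eq|]; [exfalso|nra].
    assert (0 < u) by (unfold xexp in Eq; pose proof (exp_pos u); nra).
    pose proof (xexp_increasing u t' ltac:(lra)). lra.
Qed.

Lemma phase_nonincreasing t t' : t <= t' ->
  (forall m, t <= m <= t' -> admissible m) -> phase t' <= phase t.
Proof.
  intros Htt' Hadm.
  assert (Hint : forall p r, t <= p -> r <= t' -> ~ (p < -1 < r) ->
                 forall m, p < m < r -> -1 < cosb m < 1).
  { intros p r Hp Hr Hsplit m Hm. apply (admissible_interior t t'); auto; lra. }
  destruct (Rlt_le_dec t (-1)); [destruct (Rlt_le_dec (-1) t')|].
  - apply Rle_trans with (phase (-1)).
    + apply phase_nonincreasing_open; [lra | intros; apply Hadm; lra |].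
      apply Hint; lra.
    + apply phase_nonincreasing_open; [lra | intros; apply Hadm; lra |].
      apply Hint; lra.
  - apply phase_nonincreasing_open; auto. apply Hint; lra.
  - apply phase_nonincreasing_open; auto. apply Hint; lra.
Qed.
End Phase.

Definition char_root (tau a : R) (w z : C) : Prop :=
  (z + RtoC a - w * cexp (- (RtoC tau * z)))%C = 0%C.

Lemma char_root_polar tau a (w : C) x y : w <> 0%C ->
  char_root tau a w (x, y) <->
  (x + a = Cmod w * exp (- (tau * x)) * cos (Arg w - tau * y) /\
   y = Cmod w * exp (- (tau * x)) * sin (Arg w - tau * y)).
Proof.
  intros Hw. destruct (Arg_polar w Hw) as [H1 H2].
  destruct w as [w1 w2]. unfold Re, Im in H1, H2; simpl in H1, H2.
  unfold char_root, cexp, Cplus, Cminus, Cmult, Copp, RtoC, Re, Im; simpl.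
  replace (- (tau * x - 0 * y)) with (- (tau * x)) by ring.
  replace (- (tau * y + 0 * x)) with (- (tau * y)) by ring.
  set (W := Cmod (w1, w2)) in *. set (phi := Arg (w1, w2)) in *. clearbody W phi.
  subst w1 w2. unfold Rminus. rewrite cos_plus, sin_plus.
  split.
  - intros H. injection H as E1 E2. split; nra.
  - intros [E1 E2]. apply injective_projections; simpl; nra.
Qed.

Lemma cos_sin_eq_2kPI b th : cos th = cos b -> sin th = sin b ->
  exists k : Z, b = th + 2 * IZR k * PI.
Proof.
  intros Hc Hs.
  assert (Hd : cos (b - th) = 1).
  { rewrite cos_minus, Hc, Hs. pose proof (sin2_cos2 b). unfold Rsqr in *. lra. }
  assert (Hh : sin ((b - th) / 2) = 0).
  { replace (b - th) with (2 * ((b - th) / 2)) in Hd by field.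
    rewrite cos_2a_sin in Hd. nra. }
  destruct (sin_eq_0_0 _ Hh) as [k Hk]. exists k. lra.
Qed.

Lemma Rabs_le_shift_2kPI phi G k : -PI < phi <= PI -> phi = G + 2 * IZR k * PI ->
  Rabs phi <= Rabs G.
Proof.
  intros Hp E. pose proof PI_RGT_0.
  destruct (Z.lt_total k 0) as [Hk|[->|Hk]].
  - assert (IZR k <= -1) by (apply IZR_le; lia).
    assert (PI <= G) by nra. rewrite (Rabs_right G) by lra. apply Rabs_le; lra.
  - rewrite E. simpl. rewrite Rmult_0_r, Rmult_0_l, Rplus_0_r. lra.
  - assert (1 <= IZR k) by (apply IZR_le; lia).
    assert (G <= - PI) by nra. rewrite (Rabs_left G) by lra. apply Rabs_le; lra.
Qed.

Lemma angle_equation_bound phi b S : -PI < phi <= PI -> 0 <= S ->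
  phi = b + S * sin b -> Rabs phi <= acos (cos b) + S * Rabs (sin b).
Proof.
  intros Hphi HS E.
  set (th := acos (cos b)).
  assert (Hth : 0 <= th <= PI) by apply acos_bound.
  assert (Hcth : cos th = cos b) by apply cos_acos, COS_bound.
  assert (Hsth : sin th = Rabs (sin b)).
  { unfold th. rewrite sin_acos, Rtrigo_facts.sin_cos_Rabs by apply COS_bound. reflexivity. }
  pose proof (sin_ge_0 th (proj1 Hth) (proj2 Hth)).
  destruct (Rle_dec 0 (sin b)) as [Hsb|Hsb].
  - rewrite (Rabs_right (sin b)) in Hsth |- * by lra.
    destruct (cos_sin_eq_2kPI b th Hcth Hsth) as [k Hk].
    assert (Hk' : phi = (th + S * sin th) + 2 * IZR k * PI) by (rewrite Hsth; lra).
    pose proof (Rabs_le_shift_2kPI _ _ k Hphi Hk') as Hle.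
    rewrite (Rabs_right (th + S * sin th)) in Hle by nra. lra.
  - rewrite (Rabs_left (sin b)) in Hsth |- * by lra.
    assert (Hc' : cos (- th) = cos b) by (rewrite cos_neg; auto).
    assert (Hs' : sin (- th) = sin b) by (rewrite sin_neg; lra).
    destruct (cos_sin_eq_2kPI b (- th) Hc' Hs') as [k Hk].
    assert (Hk' : phi = - (th + S * sin th) + 2 * IZR k * PI)
      by (rewrite E, Hsth, Hk at 1; ring).
    pose proof (Rabs_le_shift_2kPI _ _ k Hphi Hk') as Hle.
    rewrite (Rabs_left1 (- (th + S * sin th))) in Hle by nra. lra.
Qed.

(* For delay [tau] the substitution [u = tau (x + a)] turns the root equations into a
   problem about the phase profile with gain [K = tau |w| e^(tau a)]. *)
Definition gain (tau a : R) (w : C) : R := tau * Cmod w * exp (tau * a).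

Lemma gain_pos tau a (w : C) : 0 < tau -> w <> 0%C -> 0 < gain tau a w.
Proof.
  intros Htau Hw. unfold gain. pose proof (proj1 (Cmod_gt_0 w) Hw). pose proof (exp_pos (tau * a)).
  apply Rmult_lt_0_compat; nra.
Qed.

Lemma rho_gain tau a (w : C) x :
  rho (gain tau a w) (tau * (x + a)) = tau * Cmod w * exp (- (tau * x)).
Proof.
  unfold rho, gain. rewrite Rmult_assoc, <- exp_plus. do 2 f_equal. ring.
Qed.

Lemma root_to_phase tau a (w : C) x y : 0 < tau -> w <> 0%C -> 0 <= x ->
  char_root tau a w (x, y) ->
  exists t, tau * a <= t /\ admissible (gain tau a w) t /\
            Rabs (Arg w) <= phase (gain tau a w) t.
Proof.
  intros Htau Hw Hx Hroot.
  destruct (proj1 (char_root_polar tau a w x y Hw) Hroot) as [E1 E2].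
  set (K := gain tau a w). set (t := tau * (x + a)). set (b := Arg w - tau * y).
  assert (HS : rho K t = tau * Cmod w * exp (- (tau * x))) by apply rho_gain.
  pose proof (rho_pos K (gain_pos tau a w Htau Hw) t) as HS0.
  set (S := rho K t) in *.
  assert (Hq : cosb K t = cos b).
  { apply Rmult_eq_reg_r with S; [|lra].
    rewrite cosb_rho by (apply gain_pos; auto).
    unfold t. rewrite HS, E1. fold b. ring. }
  exists t. split; [unfold t; nra|]. split.
  - unfold admissible. rewrite Hq. apply COS_bound.
  - unfold phase. fold S. rewrite Hq.
    replace (1 - cos b ^ 2) with (1 - (cos b)²) by (unfold Rsqr; ring).
    rewrite <- Rtrigo_facts.sin_cos_Rabs.
    apply angle_equation_bound; [apply Arg_bound | lra |].
    assert (tau * y = S * sin b) by (rewrite HS, E2; fold b; ring).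
    unfold b at 1. lra.
Qed.

Lemma phase_to_root tau a (w : C) t : 0 < tau -> w <> 0%C -> tau * a <= t ->
  admissible (gain tau a w) t -> phase (gain tau a w) t = Rabs (Arg w) ->
  exists x y, 0 <= x /\ char_root tau a w (x, y).
Proof.
  intros Htau Hw Ht Hadm Hph.
  set (K := gain tau a w) in *.
  set (q := cosb K t) in *. set (S := rho K t). set (th := acos q).
  assert (HqS : q * S = t) by (apply cosb_rho, gain_pos; auto).
  assert (Hsin : sin th = sqrt (1 - q ^ 2)).
  { unfold th. rewrite sin_acos by auto. unfold Rsqr. f_equal. ring. }
  assert (Hcos : cos th = q) by (apply cos_acos; auto).
  assert (Hphase : th + S * sin th = Rabs (Arg w)) by (rewrite Hsin; exact Hph).
  set (x := t / tau - a).
  assert (Hx : Cmod w * exp (- (tau * x)) = S / tau).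
  { unfold S, K. replace t with (tau * (x + a)) by (unfold x; field; lra).
    rewrite rho_gain. field. lra. }
  assert (Hx0 : 0 <= x).
  { unfold x. apply Rmult_le_reg_l with tau; [lra|].
    replace (tau * (t / tau - a)) with (t - tau * a) by (field; lra). lra. }
  (* the angle [Arg w - tau y] is [th] or [-th] according to the sign of [Arg w] *)
  destruct (Rle_dec 0 (Arg w)) as [Hp|Hp].
  - rewrite Rabs_right in Hphase by lra.
    exists x, (S * sin th / tau). split; auto.
    apply char_root_polar; auto. rewrite Hx.
    replace (Arg w - tau * (S * sin th / tau)) with th by (field_simplify; lra).
    rewrite Hcos. unfold x. rewrite <- HqS. split; field; lra.
  - rewrite Rabs_left in Hphase by lra.
    exists x, (- (S * sin th) / tau). split; auto.
    apply char_root_polar; auto. rewrite Hx.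
    replace (Arg w - tau * (- (S * sin th) / tau)) with (- th) by (field_simplify; lra).
    rewrite cos_neg, sin_neg, Hcos. unfold x. rewrite <- HqS. split; field; lra.
Qed.

Lemma sqrt_diff_squares W a : 0 < W -> sqrt (W ^ 2 - a ^ 2) = W * sqrt (1 - (a / W)²).
Proof.
  intros HW. replace (W ^ 2 - a ^ 2) with (W ^ 2 * (1 - (a / W)²)) by (unfold Rsqr; field; lra).
  rewrite sqrt_mult_alt by nra. rewrite sqrt_pow2 by lra. reflexivity.
Qed.

(* The starting point [u = tau a] corresponds to [x = 0]: there [cosb = a / |w|]
   (i.e. [xexp = (a/|w|) K]) and the phase is [acos (a/|w|) + tau sqrt (|w|^2 - a^2)]. *)
Lemma cosb_start tau a (w : C) : 0 < tau -> w <> 0%C ->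
  cosb (gain tau a w) (tau * a) = a / Cmod w.
Proof.
  intros Htau Hw. pose proof (proj1 (Cmod_gt_0 w) Hw). pose proof (exp_pos (tau * a)).
  unfold cosb, gain, xexp. field. lra.
Qed.

Lemma xexp_start tau a (w : C) : 0 < tau -> w <> 0%C ->
  xexp (tau * a) = a / Cmod w * gain tau a w.
Proof.
  intros Htau Hw. pose proof (proj1 (Cmod_gt_0 w) Hw).
  unfold xexp, gain. field. lra.
Qed.

Lemma phase_start tau a (w : C) : 0 < tau -> w <> 0%C ->
  phase (gain tau a w) (tau * a) = acos (a / Cmod w) + tau * sqrt (Cmod w ^ 2 - a ^ 2).
Proof.
  intros Htau Hw. pose proof (proj1 (Cmod_gt_0 w) Hw).
  assert (Hr : rho (gain tau a w) (tau * a) = tau * Cmod w).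
  { replace (tau * a) with (tau * (0 + a)) by ring. rewrite rho_gain.
    replace (- (tau * 0)) with 0 by ring. rewrite exp_0. ring. }
  unfold phase. rewrite cosb_start, Hr, sqrt_diff_squares by auto.
  replace ((a / Cmod w) ^ 2) with ((a / Cmod w)²) by (unfold Rsqr; ring). ring.
Qed.

(* Instability criterion: if the phase at the start reaches [|Arg w|] (or the start is
   not admissible from below), the phase sweeps down to 0 over an admissible segment
   and, by the intermediate value theorem, meets [|Arg w|]: a root with [Re z >= 0]. *)
Lemma unstable_criterion tau a (w : C) : 0 < tau -> w <> 0%C -> a <= Cmod w ->
  (- Cmod w <= a -> Rabs (Arg w) <= phase (gain tau a w) (tau * a)) -> ~ T a w tau.
Proof.
  intros Htau Hw HaW Hstart [_ Hstable].
  pose proof (proj1 (Cmod_gt_0 w) Hw) as HW.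
  pose proof (xexp_start tau a w Htau Hw) as Hx0.
  set (K := gain tau a w) in *.
  assert (HK : 0 < K) by (apply gain_pos; auto).
  destruct (xexp_level K HK) as [t2 [Ht2 Hx2]].
  assert (Hq2 : cosb K t2 = 1) by (unfold cosb; rewrite Hx2; field; lra).
  assert (Hle2 : tau * a <= t2).
  { destruct (Rle_lt_dec (tau * a) t2) as [|Hlt]; auto.
    pose proof (xexp_increasing t2 (tau * a) ltac:(lra)).
    assert (a / Cmod w * Cmod w = a) by (field; lra).
    assert (a / Cmod w <= 1) by nra. nra. }
  assert (Hadm2 : admissible K t2) by (unfold admissible; lra).
  assert (Ht1 : exists t1, tau * a <= t1 <= t2 /\ Rabs (Arg w) <= phase K t1 /\
                  forall m, t1 <= m <= t2 -> admissible K m).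
  { destruct (xexp_superlevel_tail (- K) (tau * a) t2 Hle2 ltac:(lra))
      as [Hall | [t1 [Ht1 [E Htail]]]].
    - exists (tau * a). split; [lra|]. split.
      + apply Hstart. specialize (Hall (tau * a) ltac:(lra)).
        assert (-1 <= a / Cmod w) by nra.
        assert (a / Cmod w * Cmod w = a) by (field; lra). nra.
      + intros m Hm. apply (admissible_left K HK m t2); [lra | auto | apply Hall; lra].
    - exists t1. split; [auto|]. split.
      + rewrite phase_cosb_m1 by (unfold cosb; rewrite E; field; lra).
        apply Rabs_Arg_le_PI.
      + intros m Hm. apply (admissible_left K HK m t2); [lra | auto | apply Htail; lra]. }
  destruct Ht1 as [t1 [Ht1 [Hph1 Hadm]]].
  destruct (IVT_gen (phase K) t1 t2 (Rabs (Arg w)) (continuous_phase K)) as [t [Ht E]].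
  { rewrite (phase_cosb_1 K t2 Hq2). pose proof (Rabs_Arg_le_PI w).
    rewrite Rmin_right, Rmax_left; lra. }
  rewrite Rmin_left, Rmax_right in Ht by lra.
  destruct (phase_to_root tau a w t Htau Hw ltac:(lra) (Hadm t Ht) E) as [x [y [Hx Hroot]]].
  specialize (Hstable _ Hroot). simpl in Hstable. lra.
Qed.

(* Stability criterion: a root with [Re z >= 0] would give an admissible [t >= tau a]
   with phase at least [|Arg w|]; monotonicity of the phase pushes this back to the
   start (or to a point of phase [PI]), contradicting the hypothesis. *)
Lemma stable_criterion tau a (w : C) : 0 < tau -> w <> 0%C -> - Cmod w < a ->
  phase (gain tau a w) (tau * a) < Rabs (Arg w) -> T a w tau.
Proof.
  intros Htau Hw HaW Hph. split; auto. intros [x y] Hroot. simpl.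
  destruct (Rlt_le_dec x 0) as [|Hx]; auto. exfalso.
  destruct (root_to_phase tau a w x y Htau Hw Hx Hroot) as [t [Ht [Hadm Hge]]].
  pose proof (proj1 (Cmod_gt_0 w) Hw) as HW.
  pose proof (xexp_start tau a w Htau Hw) as Hx0.
  set (K := gain tau a w) in *.
  assert (HK : 0 < K) by (apply gain_pos; auto).
  assert (Hlow : - K < xexp (tau * a)).
  { assert (a / Cmod w * Cmod w = a) by (field; lra).
    assert (-1 < a / Cmod w) by nra. nra. }
  destruct (xexp_superlevel_head (- K) (tau * a) t Ht Hlow) as [Hall | [t1 [Ht1 [E Hhead]]]].
  - assert (phase K t <= phase K (tau * a)).
    { apply phase_nonincreasing; auto. intros m Hm.
      apply (admissible_left K HK m t); [lra | auto | apply Hall; lra]. }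
    lra.
  - assert (Hmono : phase K t1 <= phase K (tau * a)).
    { apply phase_nonincreasing; [auto | lra |]. intros m Hm.
      apply (admissible_left K HK m t); [lra | auto | apply Hhead; lra]. }
    rewrite phase_cosb_m1 in Hmono by (unfold cosb; rewrite E; field; lra).
    pose proof (Rabs_Arg_le_PI w). lra.
Qed.

(* A root with
   [x = Re z >= 0] would satisfy [|z + a|^2 = |w|^2 e^(-2 tau x) <= a^2 <= |x + a|^2],
   forcing [z = 0] and then [a = w], contradicting [Re w < a]. *)
Lemma stable_for_all_delays tau a (w : C) : 0 < tau -> Cmod w <= a -> Re w < a ->
  T a w tau.
Proof.
  intros Htau HWa Hre. split; auto. intros [x y] Hroot. simpl.
  destruct (Rlt_le_dec x 0) as [|Hx]; auto. exfalso.
  pose proof (Cmod2_alt w) as HW2. pose proof (Cmod_ge_0 w).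
  destruct w as [w1 w2]. unfold Re, Im in *. cbn [fst snd] in Hre, HW2.
  unfold cexp, Cplus, Cminus, Cmult, Copp, RtoC, Re, Im in Hroot; simpl in Hroot.
  injection Hroot as E1 E2.
  replace (- (tau * x - 0 * y)) with (- (tau * x)) in * by ring.
  replace (- (tau * y + 0 * x)) with (- (tau * y)) in * by ring.
  set (e := exp (- (tau * x))) in *.
  set (c := cos (- (tau * y))) in *. set (s := sin (- (tau * y))) in *.
  assert (Hcs : c * c + s * s = 1).
  { pose proof (sin2_cos2 (- (tau * y))) as Hpyth. unfold Rsqr in Hpyth. fold c s in Hpyth.
    lra. }
  assert (He : 0 < e <= 1).
  { split; [apply exp_pos|]. unfold e. rewrite <- exp_0.
    destruct (Req_dec x 0) as [->|]; [right; f_equal; ring | left; apply exp_increasing; nra]. }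
  assert (Hmod : (x + a) ^ 2 + y ^ 2 = (w1 ^ 2 + w2 ^ 2) * e ^ 2).
  { replace (x + a) with (w1 * (e * c) - w2 * (e * s)) by lra.
    replace y with (w1 * (e * s) + w2 * (e * c)) at 1 by lra.
    replace (w1 ^ 2 + w2 ^ 2) with ((w1 ^ 2 + w2 ^ 2) * (c * c + s * s)) by (rewrite Hcs; ring).
    ring. }
  assert (Hx0 : x = 0 /\ y = 0).
  { assert ((w1 ^ 2 + w2 ^ 2) * e ^ 2 <= a ^ 2).
    { rewrite <- HW2. assert (e ^ 2 <= 1) by nra. nra. }
    nra. }
  destruct Hx0 as [-> ->]. unfold e, c, s in E1.
  rewrite Rmult_0_r, Ropp_0, exp_0, cos_0, sin_0 in E1. lra.
Qed.

(* For [w = 0] the only root is [z = -a]. *)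
Lemma unstable_without_feedback tau a : 0 < tau -> a <= 0 -> ~ T a 0%C tau.
Proof.
  intros Htau Ha [_ Hstable].
  assert (Hroot : Re (RtoC (- a)) < 0).
  { apply Hstable. unfold cexp, Cplus, Cminus, Cmult, Copp, RtoC, Re, Im; simpl.
    apply injective_projections; simpl; ring. }
  simpl in Hroot. lra.
Qed.

Lemma le_acos_iff c th : -1 <= c <= 1 -> 0 <= th <= PI -> (th <= acos c <-> c <= cos th).
Proof.
  intros Hc Hth. pose proof (acos_bound c). split; intros Hle.
  - rewrite <- (cos_acos c Hc). apply cos_decr_1; lra.
  - apply cos_decr_0; try lra. rewrite cos_acos; auto.
Qed.

Lemma Rabs_Arg_le_acos_iff a (w : C) : w <> 0%C -> - Cmod w <= a <= Cmod w ->
  (Rabs (Arg w) <= acos (a / Cmod w) <-> a <= Re w).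
Proof.
  intros Hw Ha. pose proof (proj1 (Cmod_gt_0 w) Hw) as HW.
  assert (Hdiv : a / Cmod w * Cmod w = a) by (field; lra).
  rewrite le_acos_iff, (Re_cos_Rabs_Arg w Hw); [| nra | apply Rabs_Arg_le_PI].
  split; intros; nra.
Qed.

Lemma unstable_for_all_delays tau a (w : C) : 0 < tau -> a <= Re w -> ~ T a w tau.
Proof.
  intros Htau Hre. destruct (classic (w = 0%C)) as [->|Hw].
  { apply unstable_without_feedback; auto. }
  pose proof (Re_between_Cmod w).
  apply unstable_criterion; auto; [lra|]. intros Ha.
  rewrite phase_start by auto.
  pose proof (sqrt_pos (Cmod w ^ 2 - a ^ 2)).
  assert (Rabs (Arg w) <= acos (a / Cmod w)) by (apply Rabs_Arg_le_acos_iff; auto; lra).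
  nra.
Qed.

(* [acos c = arccot (c / sqrt (1 - c^2))] on (-1, 1): Stdlib's definition of [acos]. *)
Lemma acos_arccot c : -1 < c < 1 -> acos c = arccot (c / sqrt (1 - c²)).
Proof.
  intros Hc. unfold acos, arccot.
  destruct (Rle_dec c (-1)); [lra|]. destruct (Rle_dec 1 c); [lra|]. reflexivity.
Qed.

Lemma delay_window a (w : C) : w <> 0%C -> Re w < a < Cmod w ->
  (forall tau, T a w tau <-> 0 < tau < tau_c a w) /\
  tau_c a w = / sqrt (Cmod w ^ 2 - a ^ 2) *
              (Rabs (Arg w) - arccot (a / sqrt (Cmod w ^ 2 - a ^ 2))) /\
  0 < tau_c a w.
Proof.
  intros Hw Ha. pose proof (proj1 (Cmod_gt_0 w) Hw) as HW.
  pose proof (Re_between_Cmod w).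
  assert (Hom : 0 < sqrt (Cmod w ^ 2 - a ^ 2)) by (apply sqrt_lt_R0; nra).
  assert (Hdiv : a / Cmod w * Cmod w = a) by (field; lra).
  assert (Hc : -1 < a / Cmod w < 1) by (split; nra).
  assert (Hcrit : acos (a / Cmod w) < Rabs (Arg w)).
  { apply Rnot_le_lt. rewrite Rabs_Arg_le_acos_iff; auto; lra. }
  set (om := sqrt (Cmod w ^ 2 - a ^ 2)) in *.
  assert (Hpos : 0 < tau_c a w).
  { unfold tau_c. fold om. apply Rmult_lt_0_compat; [apply Rinv_0_lt_compat|]; lra. }
  assert (Hiff : forall tau, tau < tau_c a w <-> acos (a / Cmod w) + tau * om < Rabs (Arg w)).
  { intros tau. unfold tau_c. fold om.
    replace (Rabs (Arg w)) with (acos (a / Cmod w) + om * (/ om * (Rabs (Arg w) - acos (a / Cmod w))))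
      at 2 by (field; lra).
    split; intros; nra. }
  split; [|split; auto].
  - intros tau. split.
    + intros HT. pose proof (proj1 HT) as Htau. split; auto. apply Hiff.
      apply Rnot_le_lt. intros Hle. apply (unstable_criterion tau a w); auto; [lra|].
      intros _. rewrite phase_start by auto. fold om. lra.
    + intros [Htau Hlt]. apply stable_criterion; auto; [lra|].
      rewrite phase_start by auto. fold om. apply Hiff; auto.
  - unfold tau_c. fold om. rewrite acos_arccot by auto. do 3 f_equal.
    unfold om. rewrite sqrt_diff_squares by auto. field. split; [|lra].
    apply Rgt_not_eq, sqrt_lt_R0. unfold Rsqr. nra.
Qed.

Lemma regime_trichotomy a (w : C) :
  (Cmod w <= a /\ Re w < a) \/ (w <> 0%C /\ Re w < a /\ a < Cmod w) \/ a <= Re w.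
Proof.
  destruct (Rlt_le_dec (Re w) a) as [Hr|Hr]; [|right; right; auto].
  destruct (Rle_lt_dec (Cmod w) a) as [Hc|Hc]; [left; auto|].
  right; left. repeat split; auto.
  intros ->. rewrite Cmod_0 in Hc. simpl in Hr. lra.
Qed.

Theorem mainTheorem1 (a : R) (w : C) :
  (* (I) *)
  ((forall tau, T a w tau <-> 0 < tau) <-> (Cmod w <= a /\ Re w < a)) /\
  (* (II) *)
  (((exists tau, T a w tau) /\ (exists tau, 0 < tau /\ ~ T a w tau))
     <-> (w <> 0%C /\ Re w < a /\ a < Cmod w)) /\
  ((w <> 0%C /\ Re w < a /\ a < Cmod w) ->
     (forall tau, T a w tau <-> 0 < tau < tau_c a w) /\
     tau_c a w = / sqrt (Cmod w ^ 2 - a ^ 2) *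
                 (Rabs (Arg w) - arccot (a / sqrt (Cmod w ^ 2 - a ^ 2))) /\
     0 < tau_c a w) /\
  (* (III) *)
  ((forall tau, ~ T a w tau) <-> a <= Re w).
Proof.
  assert (HI : Cmod w <= a /\ Re w < a -> forall tau, T a w tau <-> 0 < tau).
  { intros [H1 H2] tau. split; intros Ht; [apply Ht | apply stable_for_all_delays; auto]. }
  assert (HII : w <> 0%C /\ Re w < a /\ a < Cmod w ->
                (forall tau, T a w tau <-> 0 < tau < tau_c a w) /\ 0 < tau_c a w).
  { intros [Hw Ha]. destruct (delay_window a w Hw Ha) as [Hwin [_ Hpos]]. auto. }
  assert (HIII : a <= Re w -> forall tau, ~ T a w tau).
  { intros H tau HT. exact (unstable_for_all_delays tau a w (proj1 HT) H HT). }
  split; [|split; [|split]].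
  - split; [|exact HI]. intros Hall.
    destruct (regime_trichotomy a w) as [H|[H|H]]; auto; exfalso.
    + destruct (HII H) as [Hwin Hpos].
      pose proof (proj1 (Hwin _) (proj2 (Hall _) Hpos)). lra.
    + apply (HIII H 1), Hall. lra.
  - split.
    + intros [[t1 Ht1] [t2 [Ht2 Hn2]]].
      destruct (regime_trichotomy a w) as [H|[H|H]]; auto; exfalso.
      * apply Hn2, HI; auto.
      * apply (HIII H t1 Ht1).
    + intros H. destruct (HII H) as [Hwin Hpos]. split.
      * exists (tau_c a w / 2). apply Hwin. lra.
      * exists (tau_c a w). split; auto. intros HT. apply Hwin in HT. lra.
  - intros [Hw Ha]. apply delay_window; auto.
  - split; [|exact HIII]. intros Hnone.
    destruct (regime_trichotomy a w) as [H|[H|H]]; auto; exfalso.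
    + apply (Hnone 1), HI; auto. lra.
    + destruct (HII H) as [Hwin Hpos]. apply (Hnone (tau_c a w / 2)), Hwin. lra.
Qed.
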